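(* Let $\mathcal F$ be a proper filter on $\omega$. The game $\mathfrak G(\mathcal F,[\omega]^{<\omega},\mathcal F^c)$ is equivalent to $\mathfrak G(\mathcal F,\omega,\mathcal F^c)$ (a player has a winning strategy in one iff the same player has one in the other). Consequently, in $\mathfrak G(\mathcal F,[\omega]^{<\omega},\mathcal F^c)$, player I never has a winning strategy, and player II has a winning strategy if and only if $\mathcal F$ is not a Ramsey ultrafilter.
   Context: A filter on $\omega$ is a family $\mathcal F\subseteq\mathcal P(\omega)$ closed under finite intersections and supersets and containing all cofinite sets; it is proper if all its members are infinite. $\mathcal F^c=\mathcal P(\omega)\setminus\mathcal F$. Game $\mathfrak G(\mathcal X,\omega,\mathcal Z)$: at each stage $k$, I chooses $X_k\in\mathcal X$ and II responds with $n_k\in X_k$; II wins if $\{n_k:k\in\omega\}\in\mathcal Z$. Game $\mathfrak G(\mathcal X,[\omega]^{<\omega},\mathcal Z)$: at each stage $k$, I chooses $X_k\in\mathcal X$ and II responds with a nonempty finite $s_k\subseteq X_k$; II wins if $\bigcup_k s_k\in\mathcal Z$. In each game I wins when II does not. A tree is a set $T$ of finite sequences of natural numbers containing the empty sequence and closed under initial segments; it is an $\mathcal F$-tree if for each $\bar s\in T$ there is $X_{\bar s}\in\mathcal F$ with $\bar s^\frown n\in T$ for all $n\in X_{\bar s}$; a branch (infinite sequence with all initial segments in $T$) is in $\mathcal F$ if its set of values is in $\mathcal F$. $\mathcal F$ is Ramsey if every $\mathcal F$-tree has a branch in $\mathcal F$; a Ramsey ultrafilter is an ultrafilter that is Ramsey.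 *)

From Stdlib Require Import List Arith.
Import ListNotations.

Definition nset := nat -> Prop.

Definition finite_set (A : nset) : Prop := exists N, forall n, A n -> n < N.
Definition cofinite (A : nset) : Prop := finite_set (fun n => ~ A n).

(* Filter on omega (as in the paper: contains all cofinite sets). *)
Definition is_filter (F : nset -> Prop) : Prop :=
  (forall A B, F A -> F B -> F (fun n => A n /\ B n)) /\
  (forall A B, F A -> (forall n, A n -> B n) -> F B) /\
  (forall A, cofinite A -> F A).

Definition proper_filter (F : nset -> Prop) : Prop :=
  is_filter F /\ forall A, F A -> ~ finite_set A.

Definition ultrafilter (F : nset -> Prop) : Prop :=
  proper_filter F /\ forall A, F A \/ F (fun n => ~ A n).

Definition is_tree (T : list nat -> Prop) : Prop :=
  T [] /\ forall s t, T (s ++ t) -> T s.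

Definition F_tree (F : nset -> Prop) (T : list nat -> Prop) : Prop :=
  is_tree T /\ forall s, T s -> exists X, F X /\ forall n, X n -> T (s ++ [n]).

Definition prefix {A : Type} (b : nat -> A) (k : nat) : list A := map b (seq 0 k).

Definition range (b : nat -> nat) : nset := fun m => exists k, b k = m.

Definition is_branch (T : list nat -> Prop) (b : nat -> nat) : Prop :=
  forall k, T (prefix b k).

Definition Ramsey (F : nset -> Prop) : Prop :=
  forall T, F_tree F T -> exists b, is_branch T b /\ F (range b).

Definition Ramsey_ultrafilter (F : nset -> Prop) : Prop :=
  ultrafilter F /\ Ramsey F.

(* Strategy of I: from II's previous moves to a move in X. *)
Definition I_wins_omega (Xc Z : nset -> Prop) : Prop :=
  exists sigma : list nat -> nset,
    (forall h, Xc (sigma h)) /\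
    forall n : nat -> nat,
      (forall k, sigma (prefix n k) (n k)) -> ~ Z (range n).

(* Strategy of II: from I's moves X_0..X_k to a response n_k in X_k. *)
Definition II_wins_omega (Xc Z : nset -> Prop) : Prop :=
  exists tau : list nset -> nat,
    (forall h X, Xc X -> X (tau (h ++ [X]))) /\
    forall X : nat -> nset,
      (forall k, Xc (X k)) -> Z (range (fun k => tau (prefix X (S k)))).

Definition legal_fin_move (X s : nset) : Prop :=
  finite_set s /\ (exists m, s m) /\ (forall m, s m -> X m).

Definition union_moves (s : nat -> nset) : nset := fun m => exists k, s k m.

Definition I_wins_fin (Xc Z : nset -> Prop) : Prop :=
  exists sigma : list nset -> nset,
    (forall h, Xc (sigma h)) /\
    forall s : nat -> nset,
      (forall k, legal_fin_move (sigma (prefix s k)) (s k)) -> ~ Z (union_moves s).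

Definition II_wins_fin (Xc Z : nset -> Prop) : Prop :=
  exists tau : list nset -> nset,
    (forall h X, Xc X -> legal_fin_move X (tau (h ++ [X]))) /\
    forall X : nat -> nset,
      (forall k, Xc (X k)) -> Z (union_moves (fun k => tau (prefix X (S k)))).

Definition co (F : nset -> Prop) : nset -> Prop := fun A => ~ F A.

(* Player I never wins: against any strategy of I, player II can run two plays
   at once, always answering above everything played so far in either of them.
   Both plays follow I's strategy, so both outcomes would lie in the filter,
   although they are disjoint.

   If [A] and its
   complement both miss the filter, II answers inside [A] (every filter set
   meets [A]); if an [F]-tree has no branch in [F], II walks along that tree.
   Conversely, when [F] is a Ramsey ultrafilter, the set of possible answers of
   a strategy of II after a given history is always in [F]; the tree of these
   answers has a branch in [F], which is contained in the outcome of a play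
   following the strategy.

   The two games are equivalent because a natural number [n] can be played as
   the finite set {n}, so a strategy for the number game becomes one for the
   finite-set game (for II) and conversely (for I). *)

From Stdlib Require Import List Arith Lia Classical ClassicalEpsilon.
Import ListNotations.

Lemma prefix_S {A : Type} (b : nat -> A) (k : nat) : prefix b (S k) = prefix b k ++ [b k].
Proof. unfold prefix. now rewrite seq_S, map_app. Qed.

(* Rebuilds a history from the opponent's moves, answering each one with [r]. *)
Definition replay {A B : Type} (r : list A -> B -> A) (h : list B) : list A :=
  fold_left (fun s x => s ++ [r s x]) h [].

Lemma replay_snoc {A B : Type} (r : list A -> B -> A) (h : list B) (x : B) :
  replay r (h ++ [x]) = replay r h ++ [r (replay r h) x].
Proof. unfold replay. now rewrite fold_left_app. Qed.

Lemma prefix_replay {A B : Type} (r : list A -> B -> A) (x : nat -> B) (y : nat -> A) :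
  (forall k, y k = r (replay r (prefix x k)) (x k)) ->
  forall k, prefix y k = replay r (prefix x k).
Proof.
  intros Hy k; induction k as [|k IH]; [reflexivity|].
  now rewrite !prefix_S, replay_snoc, IH, Hy.
Qed.

Section ProperFilter.

Variable F : nset -> Prop.
Hypothesis HF : proper_filter F.

Lemma filter_superset (A B : nset) : F A -> (forall n, A n -> B n) -> F B.
Proof. apply (proj1 (proj2 (proj1 HF))). Qed.

Lemma filter_meet (A B : nset) : F A -> F B -> exists n, A n /\ B n.
Proof.
  intros HA HB. apply NNPP; intros Hdisj.
  apply (proj2 HF _ (proj1 (proj1 HF) _ _ HA HB)).
  exists 0; intros n Hn; exfalso; eauto.
Qed.

Lemma co_filter_extensional (A B : nset) :
  (forall n, A n <-> B n) -> co F A -> co F B.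
Proof. intros HAB HA HB. apply HA, (filter_superset B); firstorder. Qed.

End ProperFilter.

Definition single (n : nat) : nset := fun m => m = n.

Lemma legal_fin_move_single (X : nset) (n : nat) : X n -> legal_fin_move X (single n).
Proof.
  unfold single; intros Xn; split; [|split].
  - exists (S n); intros m ->; lia.
  - now exists n.
  - now intros m ->.
Qed.

Lemma union_moves_single (b : nat -> nat) (m : nat) :
  union_moves (fun k => single (b k)) m <-> range b m.
Proof.
  unfold union_moves, range, single; split; intros [k Hk]; exists k; congruence.
Qed.

Section SingletonTranslation.

Variables Xc Z : nset -> Prop.
Hypothesis Z_extensional : forall A B, (forall n, A n <-> B n) -> Z A -> Z B.

Lemma I_wins_omega_of_I_wins_fin : I_wins_fin Xc Z -> I_wins_omega Xc Z.
Proof.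
  intros [sigma [Hmove Hwin]].
  exists (fun h => sigma (map single h)); split; [easy|].
  intros n Hn Hrange. apply (Hwin (fun k => single (n k))).
  - intros k. specialize (Hn k); unfold prefix in Hn; rewrite map_map in Hn.
    now apply legal_fin_move_single.
  - apply (Z_extensional (range n)); [|exact Hrange].
    intros m; symmetry; apply union_moves_single.
Qed.

Lemma II_wins_fin_of_II_wins_omega : II_wins_omega Xc Z -> II_wins_fin Xc Z.
Proof.
  intros [tau [Hmove Hwin]].
  exists (fun h => single (tau h)); split.
  - intros h X HX. now apply legal_fin_move_single, Hmove.
  - intros X HX. apply (Z_extensional _ _ (fun m => iff_sym (union_moves_single _ m))).
    now apply Hwin.
Qed.

End SingletonTranslation.

Definition element_above (X : nset) (N : nat) : nat :=
  epsilon (inhabits 0) (fun n => X n /\ N <= n).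

Lemma element_above_spec (X : nset) (N : nat) :
  ~ finite_set X -> X (element_above X N) /\ N <= element_above X N.
Proof.
  intros Hinf. unfold element_above. apply epsilon_spec, NNPP; intros Hnone.
  apply Hinf; exists N; intros n Xn.
  destruct (le_lt_dec N n); [exfalso; eauto|assumption].
Qed.

Lemma increasing_le (f : nat -> nat) :
  (forall k, f k < f (S k)) -> forall i j, i <= j -> f i <= f j.
Proof. intros Hf i j Hij; induction Hij as [|j _ IH]; [lia|specialize (Hf j); lia]. Qed.

Section TwoPlays.

Variable sigma : list nat -> nset.
Hypothesis sigma_infinite : forall h, ~ finite_set (sigma h).

(* Each answer exceeds the other play's last answer, so the two plays interleave
   strictly. *)
Fixpoint twin_histories (k : nat) : list nat * list nat :=
  match k with
  | 0 => ([], [])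
  | S k =>
      let h := twin_histories k in
      let x := element_above (sigma (fst h)) (S (last (snd h) 0)) in
      (fst h ++ [x], snd h ++ [element_above (sigma (snd h)) (S x)])
  end.

Definition left_play (k : nat) : nat :=
  element_above (sigma (fst (twin_histories k))) (S (last (snd (twin_histories k)) 0)).

Definition right_play (k : nat) : nat :=
  element_above (sigma (snd (twin_histories k))) (S (left_play k)).

Lemma prefix_left_play (k : nat) : prefix left_play k = fst (twin_histories k).
Proof. induction k as [|k IH]; [reflexivity|]. now rewrite prefix_S, IH. Qed.

Lemma prefix_right_play (k : nat) : prefix right_play k = snd (twin_histories k).
Proof. induction k as [|k IH]; [reflexivity|]. now rewrite prefix_S, IH. Qed.

Lemma left_play_follows (k : nat) : sigma (prefix left_play k) (left_play k).
Proof. rewrite prefix_left_play. apply (element_above_spec _ _ (sigma_infinite _)). Qed.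

Lemma right_play_follows (k : nat) : sigma (prefix right_play k) (right_play k).
Proof. rewrite prefix_right_play. apply (element_above_spec _ _ (sigma_infinite _)). Qed.

Lemma left_lt_right (k : nat) : left_play k < right_play k.
Proof. apply (element_above_spec _ (S (left_play k)) (sigma_infinite _)). Qed.

Lemma right_lt_next_left (k : nat) : right_play k < left_play (S k).
Proof.
  assert (Hlast : last (snd (twin_histories (S k))) 0 = right_play k)
    by apply last_last.
  change (right_play k < element_above (sigma (fst (twin_histories (S k))))
                           (S (last (snd (twin_histories (S k))) 0))).
  rewrite Hlast. apply (element_above_spec _ _ (sigma_infinite _)).
Qed.

Lemma left_right_disjoint (i j : nat) : left_play i <> right_play j.
Proof.
  assert (Hleft : forall k, left_play k < left_play (S k)).
  { intros k; pose proof (left_lt_right k); pose proof (right_lt_next_left k); lia. }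
  destruct (le_lt_dec i j) as [Hij|Hji].
  - pose proof (increasing_le _ Hleft i j Hij); pose proof (left_lt_right j); lia.
  - pose proof (increasing_le _ Hleft (S j) i Hji); pose proof (right_lt_next_left j); lia.
Qed.

End TwoPlays.

Lemma not_I_wins_omega (F : nset -> Prop) : proper_filter F -> ~ I_wins_omega F (co F).
Proof.
  intros HF [sigma [Hmove Hwin]].
  assert (Hinf : forall h, ~ finite_set (sigma h)) by (intros h; apply (proj2 HF), Hmove).
  assert (Hleft : F (range (left_play sigma)))
    by (apply NNPP, Hwin; intros k; now apply left_play_follows).
  assert (Hright : F (range (right_play sigma)))
    by (apply NNPP, Hwin; intros k; now apply right_play_follows).
  destruct (filter_meet F HF _ _ Hleft Hright) as [m [[i Hi] [j Hj]]].
  apply (left_right_disjoint sigma Hinf i j); congruence.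
Qed.

(* [r s X] is II's answer to [X] when II's own moves so far are [s]. *)
Lemma II_wins_omega_of_response (Xc Z : nset -> Prop) (r : list nat -> nset -> nat) :
  (forall s X, Xc X -> X (r s X)) ->
  (forall (X : nat -> nset) (b : nat -> nat), (forall k, Xc (X k)) ->
     (forall k, b k = r (prefix b k) (X k)) -> Z (range b)) ->
  II_wins_omega Xc Z.
Proof.
  intros Hmove Hwin.
  assert (Htau : forall h X, last (replay r (h ++ [X])) 0 = r (replay r h) X)
    by (intros h X; now rewrite replay_snoc, last_last).
  exists (fun h => last (replay r h) 0); split.
  - intros h X HX. rewrite Htau. now apply Hmove.
  - intros X HX. apply (Hwin X); [exact HX|]. intros k.
    rewrite (prefix_replay r X) by (intros j; now rewrite prefix_S, Htau).
    now rewrite prefix_S, Htau.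
Qed.

Lemma II_wins_omega_of_not_ultrafilter (F : nset -> Prop) :
  proper_filter F -> ~ ultrafilter F -> II_wins_omega F (co F).
Proof.
  intros HF Hnu.
  destruct (not_all_ex_not _ _ (fun H => Hnu (conj HF H))) as [A HA].
  apply not_or_and in HA as [HnA HnAc].
  assert (Hmeet : forall X, F X -> exists n, X n /\ A n).
  { intros X HX. apply NNPP; intros Hno. apply HnAc, (filter_superset F HF X _ HX).
    intros n Xn An; eauto. }
  apply (II_wins_omega_of_response _ _
           (fun _ X => epsilon (inhabits 0) (fun n => X n /\ A n))).
  - intros _ X HX. apply (epsilon_spec _ _ (Hmeet X HX)).
  - intros X b HX Hb Hrange. apply HnA, (filter_superset F HF _ _ Hrange).
    intros m [k <-]. rewrite Hb. apply (epsilon_spec _ _ (Hmeet _ (HX k))).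
Qed.

Lemma II_wins_omega_of_not_Ramsey (F : nset -> Prop) :
  proper_filter F -> ~ Ramsey F -> II_wins_omega F (co F).
Proof.
  intros HF HnR.
  destruct (not_all_ex_not _ _ HnR) as [T HT].
  apply imply_to_and in HT as [[[Troot _] Tsucc] Hnobranch].
  set (P := fun s (X : nset) n => X n /\ (T s -> T (s ++ [n]))).
  assert (Hstep : forall s X, F X -> exists n, P s X n).
  { intros s X HX. destruct (classic (T s)) as [Ts|nTs].
    - destruct (Tsucc s Ts) as [Y [HY Yext]].
      destruct (filter_meet F HF X Y HX HY) as [n [Xn Yn]]; exists n; split; auto.
    - destruct (filter_meet F HF X X HX HX) as [n [Xn _]]; exists n; split; tauto. }
  apply (II_wins_omega_of_response _ _ (fun s X => epsilon (inhabits 0) (P s X))).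
  - intros s X HX. apply (epsilon_spec _ _ (Hstep s X HX)).
  - intros X b HX Hb Hrange. apply Hnobranch; exists b; split; [|exact Hrange].
    intros k; induction k as [|k IH]; [exact Troot|].
    rewrite prefix_S, Hb. apply (epsilon_spec _ _ (Hstep _ _ (HX k))), IH.
Qed.

Definition successor_tree (succ : list nat -> nset) (s : list nat) : Prop :=
  forall t n u, s = t ++ n :: u -> succ t n.

Lemma successor_tree_F_tree (F : nset -> Prop) (succ : list nat -> nset) :
  (forall s, F (succ s)) -> F_tree F (successor_tree succ).
Proof.
  intros Hsucc; split; [split|].
  - intros t n u H. now destruct t.
  - intros s t Hst a n u ->. apply (Hst a n (u ++ t)). now rewrite <- app_assoc.
  - intros s Hs. exists (succ s); split; [apply Hsucc|].
    intros n Hn t m u.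
    induction u as [|x u' _] using rev_ind; intros Heq.
    + apply app_inj_tail in Heq as [-> [=->]]. exact Hn.
    + rewrite app_comm_cons, app_assoc in Heq.
      apply app_inj_tail in Heq as [-> _]. now apply (Hs t m u').
Qed.

Lemma Ramsey_successor_branch (F : nset -> Prop) (succ : list nat -> nset) :
  Ramsey F -> (forall s, F (succ s)) ->
  exists b, (forall k, succ (prefix b k) (b k)) /\ F (range b).
Proof.
  intros HR Hsucc.
  destruct (HR _ (successor_tree_F_tree F succ Hsucc)) as [b [Hbranch Hrange]].
  exists b; split; [|exact Hrange].
  intros k. apply (Hbranch (S k) (prefix b k) (b k) []). apply prefix_S.
Qed.

Lemma not_Ramsey_ultrafilter_of_II_wins_fin (F : nset -> Prop) :
  II_wins_fin F (co F) -> ~ Ramsey_ultrafilter F.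
Proof.
  intros [tau [Hmove Hwin]] [[HF Hult] HR].
  set (answers := fun h n => exists X, F X /\ tau (h ++ [X]) n).
  set (move_of := fun h n => epsilon (inhabits (fun _ => True))
                               (fun X => F X /\ tau (h ++ [X]) n)).
  assert (Hanswers : forall h, F (answers h)).
  { intros h. destruct (Hult (answers h)) as [|Hout]; [assumption|].
    destruct (Hmove h _ Hout) as [_ [[n Hn] Hsub]].
    exfalso; apply (Hsub n Hn); exists (fun m => ~ answers h m); auto. }
  destruct (Ramsey_successor_branch F (fun s => answers (replay move_of s)) HR
              (fun s => Hanswers _)) as [b [Hb Hrange]].
  set (X := fun k => move_of (replay move_of (prefix b k)) (b k)).
  assert (HX : forall k, F (X k) /\ tau (prefix X (S k)) (b k)).
  { intros k. rewrite prefix_S, (prefix_replay move_of b X (fun k => eq_refl)).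
    apply (epsilon_spec _ _ (Hb k)). }
  apply (Hwin X (fun k => proj1 (HX k))), (filter_superset F HF _ _ Hrange).
  intros m [k <-]. exists k. apply HX.
Qed.

Theorem theorem2p17 (F : nset -> Prop) (HF : proper_filter F) :
  (I_wins_fin F (co F) <-> I_wins_omega F (co F)) /\
  (II_wins_fin F (co F) <-> II_wins_omega F (co F)) /\
  ~ I_wins_fin F (co F) /\
  (II_wins_fin F (co F) <-> ~ Ramsey_ultrafilter F).
Proof.
  pose proof (co_filter_extensional F HF) as Hext.
  pose proof (not_I_wins_omega F HF) as HnoI_omega.
  pose proof (I_wins_omega_of_I_wins_fin F (co F) Hext) as HI_fin_omega.
  pose proof (II_wins_fin_of_II_wins_omega F (co F) Hext) as HII_omega_fin.
  pose proof (not_Ramsey_ultrafilter_of_II_wins_fin F) as HII_fin_RU.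
  assert (HII_RU_omega : ~ Ramsey_ultrafilter F -> II_wins_omega F (co F)).
  { intros HnRU. destruct (classic (Ramsey F)) as [HR|HnR].
    - apply II_wins_omega_of_not_ultrafilter; [exact HF|]. intros HU; now apply HnRU.
    - now apply II_wins_omega_of_not_Ramsey. }
  tauto.
Qed.
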